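(* Let $n\ge3$, $e\ge2$, $1\le k\le e-1$. The assignment $q_1\mapsto\tilde t_i\tilde t_{i-k}$ (an element independent of $i\in\mathbb{Z}/e\mathbb{Z}$) and $q_m\mapsto\tilde s_{m+1}$ for $2\le m\le n-1$ defines an injective group homomorphism from the Artin–Tits group $B(2,1,n-1)$ into $B^{(k)}(e,e,n)$.
   Context: $B(2,1,n-1)$ is the Artin–Tits group of type $B_{n-1}$ with generators $q_1,\dots,q_{n-1}$ and relations $q_1q_2q_1q_2=q_2q_1q_2q_1$, $q_mq_{m+1}q_m=q_{m+1}q_mq_{m+1}$ for $2\le m\le n-2$, and $q_aq_b=q_bq_a$ for $|a-b|>1$. $B^{(k)}(e,e,n)$ is the group with generators $\tilde t_0,\dots,\tilde t_{e-1},\tilde s_3,\dots,\tilde s_n$ and relations: $\tilde s_i\tilde s_j\tilde s_i=\tilde s_j\tilde s_i\tilde s_j$ for $|i-j|=1$; $\tilde s_i\tilde s_j=\tilde s_j\tilde s_i$ for $|i-j|>1$; $\tilde s_3\tilde t_i\tilde s_3=\tilde t_i\tilde s_3\tilde t_i$ for $i\in\mathbb{Z}/e\mathbb{Z}$; $\tilde s_j\tilde t_i=\tilde t_i\tilde s_j$ for $i\in\mathbb{Z}/e\mathbb{Z}$, $4\le j\le n$; $\tilde t_i\tilde t_{i-k}=\tilde t_j\tilde t_{j-k}$ for $i,j\in\mathbb{Z}/e\mathbb{Z}$ (it is the group of fractions of the Garside monoid with the same presentation). *)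

(* Groups given by presentations, encoded as words in the
   free group (letters = generator * sign, true = positive) modulo the
   congruence generated by free cancellation and the defining relations. *)
From mathcomp Require Import all_boot.
Set Implicit Arguments. Unset Strict Implicit. Unset Printing Implicit Defensive.

Definition inv_word (G : Type) (w : seq (G * bool)) : seq (G * bool) :=
  rev (map (fun x => (x.1, ~~ x.2)) w).

Inductive pres_eq (G : Type) (R : seq (G * bool) -> seq (G * bool) -> Prop) :
    seq (G * bool) -> seq (G * bool) -> Prop :=
| pe_refl w : pres_eq R w w
| pe_sym u v : pres_eq R u v -> pres_eq R v u
| pe_trans u v w : pres_eq R u v -> pres_eq R v w -> pres_eq R u w
| pe_ctx a b u v : pres_eq R u v -> pres_eq R (a ++ u ++ b) (a ++ v ++ b)
| pe_rel u v : R u v -> pres_eq R u v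
| pe_free g s : pres_eq R [:: (g, s); (g, ~~ s)] [::].

(* B(2,1,n-1): generator a : 'I_(n-1) stands for q_(a+1). *)
Inductive BRel (n : nat) : seq ('I_(n-1) * bool) -> seq ('I_(n-1) * bool) -> Prop :=
| brel_B (a b : 'I_(n-1)) : val a = 0 -> val b = 1 ->
    @BRel n [:: (a, true); (b, true); (a, true); (b, true)]
         [:: (b, true); (a, true); (b, true); (a, true)]
| brel_braid (a b : 'I_(n-1)) : 1 <= val a -> val b = (val a).+1 ->
    @BRel n [:: (a, true); (b, true); (a, true)] [:: (b, true); (a, true); (b, true)]
| brel_comm (a b : 'I_(n-1)) : (val a).+1 < val b ->
    @BRel n [:: (a, true); (b, true)] [:: (b, true); (a, true)].

(* B^(k)(e,e,n): generators inl i = t~_i (i in Z/eZ), inr j = s~_(j+3). *)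
Definition Tgen (e n : nat) := ('I_e + 'I_(n-2))%type.

Inductive TRel (e n k : nat) : seq (Tgen e n * bool) -> seq (Tgen e n * bool) -> Prop :=
| trel_sbraid (j1 j2 : 'I_(n-2)) : val j2 = (val j1).+1 ->
    @TRel e n k [:: (inr j1, true); (inr j2, true); (inr j1, true)]
         [:: (inr j2, true); (inr j1, true); (inr j2, true)]
| trel_scomm (j1 j2 : 'I_(n-2)) : (val j1).+1 < val j2 ->
    @TRel e n k [:: (inr j1, true); (inr j2, true)] [:: (inr j2, true); (inr j1, true)]
| trel_st (j : 'I_(n-2)) (i : 'I_e) : val j = 0 ->
    @TRel e n k [:: (inr j, true); (inl i, true); (inr j, true)]
         [:: (inl i, true); (inr j, true); (inl i, true)]
| trel_stcomm (j : 'I_(n-2)) (i : 'I_e) : 1 <= val j ->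
    @TRel e n k [:: (inr j, true); (inl i, true)] [:: (inl i, true); (inr j, true)]
| trel_tt (i i' j j' : 'I_e) :
    val i' = (val i + (e - k)) %% e -> val j' = (val j + (e - k)) %% e ->
    @TRel e n k [:: (inl i, true); (inl i', true)] [:: (inl j, true); (inl j', true)].

(* image of q_1 : t~_0 t~_(0-k) = t~_0 t~_((e-k) mod e) *)
Definition q1_image (e n k : nat) : seq (Tgen e n * bool) :=
  match insub 0 : option 'I_e, insub ((e - k) %% e) : option 'I_e with
  | Some i0, Some i1 => [:: (inl i0, true); (inl i1, true)]
  | _, _ => [::]
  end.

Definition gen_image (e n k : nat) (a : 'I_(n-1)) : seq (Tgen e n * bool) :=
  if val a == 0 then q1_image e n k
  else match insub (val a).-1 : option 'I_(n-2) with
       | Some j => [:: (inr j, true)]   (* q_m |-> s~_(m+1), m = a+1, j = m-2 *)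
       | None => [::]
       end.

Arguments gen_image : clear implicits.

Definition phi_letter (e n k : nat) (x : 'I_(n-1) * bool) : seq (Tgen e n * bool) :=
  if x.2 then gen_image e n k x.1 else inv_word (gen_image e n k x.1).

Arguments phi_letter : clear implicits.

Definition phi_word (e n k : nat) (w : seq ('I_(n-1) * bool)) : seq (Tgen e n * bool) :=
  flatten (map (phi_letter e n k) w).
Arguments phi_word : clear implicits.

From mathcomp Require Import all_boot zify.
From Stdlib Require Import Setoid Morphisms.
Set Implicit Arguments. Unset Strict Implicit.

(* Well-definedness: the relations of B(2,1,n-1) hold for the images because
   t~_i t~_(i-k) does not depend on i, which turns the type B relation for
   q_1 = t~_0 t~_(-k) into a consequence of the braid relations between s~_3
   and the t~_i.

   Injectivity: sending every t~_i to sigma_1 and s~_m to sigma_(m-1) maps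
   B^(k)(e,e,n) to the braid group B_n, and the image of q_1 becomes sigma_1^2;
   this realises B(2,1,n-1) as the braids whose permutation fixes the first
   strand.  Reidemeister-Schreier rewriting for that subgroup reads a braid
   word while tracking the position p of the first strand and emits a word of
   B(2,1,n-1) letter by letter.  Its output (up to equality in B(2,1,n-1)) and
   its final position are invariant under the braid relations, and on the
   image of a word u it returns u. *)

Global Hint Resolve pe_refl : core.

Section Presentation.
Variables (G : Type) (R : seq (G * bool) -> seq (G * bool) -> Prop).
Implicit Types u v w x y z : seq (G * bool).
Local Notation "u ≈ v" := (pres_eq R u v) (at level 70).

Global Instance pres_eq_Equivalence : Equivalence (pres_eq R).
Proof. split; [exact: pe_refl | exact: pe_sym | exact: pe_trans]. Qed.

Global Instance cat_pres_eq_Proper :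
  Proper (pres_eq R ==> pres_eq R ==> pres_eq R) (@cat _).
Proof.
move=> a b ab c d cd; transitivity (b ++ c); first exact: (pe_ctx [::] c ab).
by have := pe_ctx b [::] cd; rewrite /= !cats0.
Qed.

Lemma inv_wordK : involutive (@inv_word G).
Proof.
move=> w; rewrite /inv_word map_rev revK -map_comp.
by elim: w => //= -[g s] w ->; rewrite negbK.
Qed.

Lemma inv_word_cat u v : inv_word (u ++ v) = inv_word v ++ inv_word u.
Proof. by rewrite /inv_word map_cat rev_cat. Qed.

Lemma catwV w : w ++ inv_word w ≈ [::].
Proof.
elim: w => [|x w IH]; first exact: pe_refl.
rewrite /inv_word /= rev_cons -/(inv_word w) -cats1.
have := pe_ctx [:: x] [:: (x.1, ~~ x.2)] IH; rewrite /= -catA => ->.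
by case: x => g s; apply: pe_free.
Qed.

Lemma catVw w : inv_word w ++ w ≈ [::].
Proof. by rewrite -{2}(inv_wordK w) catwV. Qed.

Lemma catKw w u : inv_word w ++ (w ++ u) ≈ u.
Proof. by rewrite catA catVw. Qed.

Lemma catKVw w u : w ++ (inv_word w ++ u) ≈ u.
Proof. by rewrite catA catwV. Qed.

Lemma catwI y u v : y ++ u ≈ y ++ v -> u ≈ v.
Proof. by move=> yuv; rewrite -(catKw y u) yuv catKw. Qed.

Lemma commute_inv u x : u ++ x ≈ x ++ u -> inv_word u ++ x ≈ x ++ inv_word u.
Proof.
move=> ux; apply: (@catwI u).
by rewrite catKVw catA ux -catA catwV cats0.
Qed.

Lemma commute_cat u v x :
  u ++ x ≈ x ++ u -> v ++ x ≈ x ++ v -> (u ++ v) ++ x ≈ x ++ (u ++ v).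
Proof. by move=> ux vx; rewrite -catA vx catA ux catA. Qed.

Lemma semiconj_cat y x x' z z' :
  y ++ x ≈ x' ++ y -> y ++ z ≈ z' ++ y -> y ++ (x ++ z) ≈ (x' ++ z') ++ y.
Proof. by move=> yx yz; rewrite catA yx -catA yz catA. Qed.

Lemma pres_eq_catr u v t : u ≈ v -> u ++ t ≈ v ++ t.
Proof. by move=> ->. Qed.

Lemma typeB_of_braids (x y z s : seq (G * bool)) :
  x ++ y ≈ y ++ z -> s ++ x ++ s ≈ x ++ s ++ x -> s ++ y ++ s ≈ y ++ s ++ y ->
  s ++ z ++ s ≈ z ++ s ++ z ->
  forall t, x ++ y ++ s ++ x ++ y ++ s ++ t ≈ s ++ x ++ y ++ s ++ x ++ y ++ t.
Proof.
move=> xy sx sy sz.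
have {}xy t : x ++ y ++ t ≈ y ++ z ++ t by have := pres_eq_catr t xy; rewrite -!catA.
have {}sx t : s ++ x ++ s ++ t ≈ x ++ s ++ x ++ t by have := pres_eq_catr t sx; rewrite -!catA.
have {}sy t : s ++ y ++ s ++ t ≈ y ++ s ++ y ++ t by have := pres_eq_catr t sy; rewrite -!catA.
have {}sz t : s ++ z ++ s ++ t ≈ z ++ s ++ z ++ t by have := pres_eq_catr t sz; rewrite -!catA.
move=> t.
transitivity (x ++ s ++ y ++ s ++ z ++ s ++ t); first by rewrite [in s ++ _]xy -sy.
transitivity (x ++ s ++ x ++ y ++ s ++ z ++ t); first by rewrite sz -xy.
by rewrite -sx [x ++ (y ++ t)]xy -sy.
Qed.

End Presentation.

Definition word_hom (G H : Type) (f : G -> seq (H * bool)) (w : seq (G * bool)) :=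
  flatten [seq if x.2 then f x.1 else inv_word (f x.1) | x <- w].

Lemma word_hom_cat G H (f : G -> seq (H * bool)) u v :
  word_hom f (u ++ v) = word_hom f u ++ word_hom f v.
Proof. by rewrite /word_hom map_cat flatten_cat. Qed.

Lemma word_hom_pres_eq G H R S (f : G -> seq (H * bool)) :
  (forall u v, R u v -> pres_eq S (word_hom f u) (word_hom f v)) ->
  forall u v, pres_eq R u v -> pres_eq S (word_hom f u) (word_hom f v).
Proof.
move=> fR u v; elim=> {u v} //.
- by move=> u v _ ->.
- by move=> u v w _ -> _ ->.
- by move=> a b u v _ uv; rewrite !word_hom_cat uv.
- move=> g [] /=; rewrite /word_hom /= cats0; first exact: catwV.
  by rewrite -{2}(inv_wordK (f g)) catwV.
Qed.

Section Transducer.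
Variables (A B P : Type) (step : A -> bool -> P -> seq (B * bool) * P).

Fixpoint run (w : seq (A * bool)) (p : P) : seq (B * bool) * P :=
  if w is x :: w' then
    let r := step x.1 x.2 p in let r' := run w' r.2 in (r.1 ++ r'.1, r'.2)
  else ([::], p).

Lemma run_cat u v p :
  run (u ++ v) p = ((run u p).1 ++ (run v (run u p).2).1, (run v (run u p).2).2).
Proof. by elim: u p => [|x u IH] p /=; [case: run | rewrite IH catA]. Qed.

Variables (S : seq (B * bool) -> seq (B * bool) -> Prop) (valid : pred P).

Definition run_equiv u v := forall p, valid p ->
  pres_eq S (run u p).1 (run v p).1 /\ (run u p).2 = (run v p).2.

Definition relabel (G : Type) (f : G -> A) (w : seq (G * bool)) :=
  [seq (f x.1, x.2) | x <- w].

Lemma run_equiv_sym u v : run_equiv u v -> run_equiv v u.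
Proof. by move=> uv p vp; have [-> ->] := uv p vp. Qed.

Lemma relabel_cat (G : Type) (f : G -> A) u v :
  relabel f (u ++ v) = relabel f u ++ relabel f v.
Proof. exact: map_cat. Qed.

Lemma run_equiv_pres_eq (G : Type) (R : seq (G * bool) -> seq (G * bool) -> Prop)
    (f : G -> A) :
  (forall g b p, valid p -> valid (step (f g) b p).2) ->
  (forall g b, run_equiv [:: (f g, b); (f g, ~~ b)] [::]) ->
  (forall u v, R u v -> run_equiv (relabel f u) (relabel f v)) ->
  forall u v, pres_eq R u v -> run_equiv (relabel f u) (relabel f v).
Proof.
move=> step_valid fcancel fR.
have run_valid w p : valid p -> valid (run (relabel f w) p).2.
  by elim: w p => //= x w IH p vp; apply/IH/step_valid.
move=> u v; elim=> {u v}.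
- by [].
- by move=> u v _ uv p vp; have [-> ->] := uv p vp.
- move=> u v w _ uv _ vw p vp.
  by have [-> ->] := uv p vp; have [-> ->] := vw p vp.
- move=> a b u v _ uv p vp; rewrite !relabel_cat !run_cat /=.
  by have [-> ->] := uv _ (run_valid a p vp).
- exact: fR.
- exact: fcancel.
Qed.

End Transducer.

Section TypeBWords.
Variable n : nat.
Local Notation "u ≈ v" := (pres_eq (@BRel n) u v) (at level 70).

(* [qword i b] is the letter q_(i+1) with sign b (generators are numbered from
   0), or the empty word when i is out of range. *)
Definition qword (i : nat) (b : bool) : seq ('I_(n-1) * bool) :=
  if insub i is Some o then [:: (o, b)] else [::].
Local Notation Q i := (qword i true).

Lemma qwordE i b (lt_i : i < n - 1) : qword i b = [:: (Ordinal lt_i, b)].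
Proof.
rewrite /qword; case: insubP => [o _ oi|]; last by rewrite lt_i.
by congr [:: (_, _)]; apply: val_inj.
Qed.

Lemma inv_qword i b : inv_word (qword i b) = qword i (~~ b).
Proof. by rewrite /qword; case: insubP. Qed.

Lemma qwordV i b : qword i b ++ qword i (~~ b) ≈ [::].
Proof. by rewrite -inv_qword catwV. Qed.

Lemma braid_qword i : 1 <= i -> i.+1 < n - 1 -> Q i ++ Q i.+1 ++ Q i ≈ Q i.+1 ++ Q i ++ Q i.+1.
Proof.
move=> i_ge1 lt_i1; have lt_i : i < n - 1 by lia.
by rewrite (qwordE _ lt_i1) (qwordE _ lt_i); apply/pe_rel/brel_braid.
Qed.

Lemma commute_qword i j : i.+1 < j -> j < n - 1 -> Q i ++ Q j ≈ Q j ++ Q i.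
Proof.
move=> lt_ij lt_j; have lt_i : i < n - 1 by lia.
by rewrite (qwordE _ lt_j) (qwordE _ lt_i); apply/pe_rel/brel_comm.
Qed.

Lemma typeB_qword : 1 < n - 1 -> Q 0 ++ Q 1 ++ Q 0 ++ Q 1 ≈ Q 1 ++ Q 0 ++ Q 1 ++ Q 0.
Proof.
move=> lt_1; have lt_0 : 0 < n - 1 by lia.
by rewrite (qwordE _ lt_1) (qwordE _ lt_0); apply/pe_rel/brel_B.
Qed.

Definition qprod (s : seq nat) := flatten [seq Q m | m <- s].

Lemma qprod_commute x s : x < n - 1 -> all (fun m => x.+1 < m < n - 1) s ->
  qprod s ++ Q x ≈ Q x ++ qprod s.
Proof.
move=> lt_x; elim: s => [|m s IH] /=; first by rewrite cats0.
case/andP=> lt_m /IH; apply: commute_cat; symmetry; apply: commute_qword; lia.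
Qed.

Definition ladder c := qprod (iota 1 c).

Lemma ladderS c : ladder c.+1 = ladder c ++ Q c.+1.
Proof.
rewrite /ladder /qprod.
have -> : iota 1 c.+1 = iota 1 c ++ [:: c.+1] by rewrite -[c.+1]addn1 iotaD /= addnC.
by rewrite map_cat flatten_cat /= cats0.
Qed.

Lemma ladder_commute x c : c.+1 < x -> x < n - 1 -> ladder c ++ Q x ≈ Q x ++ ladder c.
Proof.
move=> lt_cx lt_x; elim: c lt_cx => [|c IH] lt_cx; first by rewrite /= cats0.
rewrite ladderS; apply: commute_cat; first by apply: IH; lia.
apply: commute_qword => //; lia.
Qed.

Lemma ladder_shift c m : 1 <= m < c -> c < n - 1 -> ladder c ++ Q m ≈ Q m.+1 ++ ladder c.
Proof.
elim: c m => [|c IH] m lt_mc lt_c; first lia.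
have [lt_m|->] : m < c \/ m = c by lia.
  rewrite ladderS -catA -commute_qword; [|lia|lia].
  by rewrite catA IH; [rewrite -catA|lia|lia].
case: c IH lt_mc lt_c => [|c] IH lt_mc lt_c; first lia.
rewrite (ladderS c.+1) (ladderS c) -!catA braid_qword; [|lia|lia].
by rewrite catA ladder_commute; [rewrite -!catA|lia|lia].
Qed.

Lemma ladder_shift_qprod c s : all (fun m => 0 < m < c) s -> c < n - 1 ->
  ladder c ++ qprod s ≈ qprod (map succn s) ++ ladder c.
Proof.
move=> s_in lt_c; elim: s s_in => [|m s IH] /=; first by rewrite cats0.
by case/andP=> m_in /IH s_shift; rewrite catA ladder_shift // -catA s_shift catA.
Qed.

Definition loop a := inv_word (ladder a) ++ Q 0 ++ ladder a.

Lemma ladder_loop a : ladder a ++ loop a ≈ Q 0 ++ ladder a.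
Proof. by rewrite /loop catKVw. Qed.

Lemma loopS a : loop a.+1 = qword a.+1 false ++ loop a ++ Q a.+1.
Proof. by rewrite /loop ladderS inv_word_cat inv_qword /= !catA. Qed.

Lemma typeB_loop a : a.+1 < n - 1 ->
  loop a ++ Q a.+1 ++ loop a ++ Q a.+1 ≈ Q a.+1 ++ loop a ++ Q a.+1 ++ loop a.
Proof.
(* y conjugates loop a to q_1 and q_(a+2) to q_2, so this is the type B
   relation between q_1 and q_2 transported by y. *)
move=> lt_a.
pose y := qprod (iota 2 a) ++ ladder a.
have y_loop : y ++ loop a ≈ Q 0 ++ y.
  rewrite /y -catA ladder_loop !catA qprod_commute //; first lia.
  by apply/allP=> m; rewrite mem_iota => ?; lia.
have y_Q : y ++ Q a.+1 ≈ Q 1 ++ y.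
  rewrite /y -catA -ladderS catA -[Q 1 ++ _]/(ladder a.+1).
  have -> : iota 2 a = map succn (iota 1 a) by exact: (iotaDl 1 1 a).
  rewrite -ladder_shift_qprod //.
  by apply/allP=> m; rewrite mem_iota => ?; lia.
apply: (@catwI _ _ y).
rewrite (semiconj_cat y_loop (semiconj_cat y_Q (semiconj_cat y_loop y_Q))).
rewrite (semiconj_cat y_Q (semiconj_cat y_loop (semiconj_cat y_Q y_loop))).
by rewrite typeB_qword //; lia.
Qed.

Lemma loop_commute_far a b : a.+1 < b -> b < n - 1 -> loop a ++ Q b ≈ Q b ++ loop a.
Proof.
move=> lt_ab lt_b; rewrite /loop; apply: commute_cat.
  by apply/commute_inv/ladder_commute.
apply: commute_cat; last exact: ladder_commute.
apply: commute_qword => //; lia.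
Qed.

Lemma loop_commute_near m b : 1 <= m < b -> b < n - 1 -> Q m ++ loop b ≈ loop b ++ Q m.
Proof.
move=> lt_mb lt_b; apply: (@catwI _ _ (ladder b)).
have shift_m := ladder_shift lt_mb lt_b.
rewrite (semiconj_cat shift_m (ladder_loop b)) (semiconj_cat (ladder_loop b) shift_m).
by rewrite -commute_qword //; lia.
Qed.

Lemma loop_qword a : loop a ++ Q a.+1 ≈ Q a.+1 ++ loop a.+1.
Proof. by rewrite loopS catA qwordV. Qed.

Lemma loop_braid a : a.+1 < n - 1 ->
  Q a.+1 ++ loop a.+1 ++ loop a ≈ loop a.+1 ++ loop a ++ Q a.+1.
Proof.
move=> lt_a; rewrite loopS.
have := typeB_loop lt_a; have := qwordV a.+1 true; have := qwordV a.+1 false.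
move: (loop a) (Q a.+1) (qword a.+1 false) => l q q' /= q'q qq' lqlq.
rewrite !catA qq' /= -!catA.
by transitivity (q' ++ q ++ l ++ q ++ l); [rewrite [q' ++ (q ++ _)]catA q'q | rewrite -lqlq].
Qed.

End TypeBWords.

Ltac decide_ifs := repeat (simpl; match goal with |- context[if ?c then _ else _] =>
  first [rewrite (_ : c = true); last by lia | rewrite (_ : c = false); last by lia] end).

Section StrandRewriting.
Variable n : nat.

(* Letter i of B_n is sigma_(i+1), which exchanges positions i and i+1, and p
   is the position of the first strand.  The coset representative carrying the
   first strand to position p shifts the strands it passes one step left,
   hence the index shift for i.+1 < p; a crossing of the first strand with the
   strand at position i contributes a conjugate of q_1 once it is a full twist. *)
Definition strand_step (i : nat) (b : bool) (p : nat) : seq ('I_(n-1) * bool) * nat :=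
  if i.+1 < p then (qword n i.+1 b, p)
  else if p < i then (qword n i b, p)
  else if i.+1 == p then (if b then loop n i else [::], i)
  else if b then ([::], p.+1) else (inv_word (loop n p), p.+1).

Local Notation strand_equiv := (run_equiv strand_step (@BRel n) (fun p => p < n)).

Lemma strand_step_valid i b p : i.+1 < n -> p < n -> (strand_step i b p).2 < n.
Proof.
move=> lt_i lt_p; rewrite /strand_step.
by case: ifP => ?; [|case: ifP => ?; [|case: ifP => ?]]; case: b => /=; lia.
Qed.

Lemma strand_braid a : a.+2 < n ->
  strand_equiv [:: (a, true); (a.+1, true); (a, true)] [:: (a.+1, true); (a, true); (a.+1, true)].
Proof.
move=> lt_a p lt_p; rewrite /= /strand_step.
have [lt_pa|[->|[->|[->|lt_ap]]]] : p < a \/ p = a \/ p = a.+1 \/ p = a.+2 \/ a.+2 < p by lia.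
- by decide_ifs; rewrite !cats0 braid_qword //; lia.
- by decide_ifs.
- by decide_ifs; rewrite !cats0 loop_qword.
- by decide_ifs; rewrite !cats0 loop_braid //; lia.
- by decide_ifs; rewrite !cats0 braid_qword //; lia.
Qed.

Lemma strand_commute a b : a.+1 < b -> b.+1 < n ->
  strand_equiv [:: (a, true); (b, true)] [:: (b, true); (a, true)].
Proof.
move=> lt_ab lt_b p lt_p; rewrite /= /strand_step.
have [lt_pa|[->|[->|[lt_p2|[->|[->|lt_bp]]]]]] :
  p < a \/ p = a \/ p = a.+1 \/ a.+1 < p < b \/ p = b \/ p = b.+1 \/ b.+1 < p by lia.
- by decide_ifs; rewrite !cats0 commute_qword //; lia.
- by decide_ifs.
- by decide_ifs; rewrite !cats0 loop_commute_far //; lia.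
- by decide_ifs; rewrite !cats0 commute_qword //; lia.
- by decide_ifs.
- by decide_ifs; rewrite !cats0 loop_commute_near //; lia.
- by decide_ifs; rewrite !cats0 commute_qword //; lia.
Qed.

Lemma strand_cancel i b : i.+1 < n -> strand_equiv [:: (i, b); (i, ~~ b)] [::].
Proof.
move=> lt_i p lt_p; rewrite /= /strand_step.
have [lt_ip|[lt_pi|[->|->]]] : i.+1 < p \/ p < i \/ p = i.+1 \/ p = i by lia.
- by decide_ifs; rewrite cats0 qwordV.
- by decide_ifs; rewrite cats0 qwordV.
- by case: b; decide_ifs; rewrite !cats0 ?catwV.
- by case: b; decide_ifs; rewrite !cats0 ?catVw.
Qed.

End StrandRewriting.

Section Embedding.
Variables (e n k : nat).
Local Notation "u ≈ v" := (pres_eq (@TRel e n k) u v) (at level 70).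

Lemma gen_image0 a : val a = 0 -> gen_image e n k a = q1_image e n k.
Proof. by rewrite /gen_image => ->. Qed.

Lemma gen_image_pos a : 0 < val a ->
  exists2 j : 'I_(n - 2), val j = (val a).-1 & gen_image e n k a = [:: (inr j, true)].
Proof.
move=> a_gt0; rewrite /gen_image; case: eqP => [a_0|_]; first by rewrite a_0 in a_gt0.
case: insubP => [j _ j_a|]; first by exists j.
by move=> /negP[]; case: a a_gt0 => m lt_m /= m_gt0; lia.
Qed.

Hypothesis e_gt0 : 0 < e.

Lemma q1_imageE : exists i0 i1 : 'I_e, [/\ val i0 = 0, val i1 = (e - k) %% e &
  q1_image e n k = [:: (inl i0, true); (inl i1, true)]].
Proof.
rewrite /q1_image; case: insubP => [i0 _ i0_0|]; last by rewrite e_gt0.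
case: insubP => [i1 _ i1_k|]; last by rewrite ltn_mod e_gt0.
by exists i0, i1.
Qed.

Lemma q1_image_tt (i i' : 'I_e) : val i' = (val i + (e - k)) %% e ->
  [:: (inl i, true); (inl i', true)] ≈ q1_image e n k.
Proof.
have [i0 [i1 [i0_0 i1_k ->]]] := q1_imageE.
by move=> ii'; apply/pe_rel/trel_tt; rewrite ?i0_0.
Qed.

Lemma q1_image_typeB (j : 'I_(n - 2)) t : val j = 0 ->
  let s := [:: (inr j, true)] in let q := q1_image e n k in
  q ++ s ++ q ++ s ++ t ≈ s ++ q ++ s ++ q ++ t.
Proof.
move=> j_0 /=; have [i0 [i1 [i0_0 i1_k ->]]] := q1_imageE.
pose i2 : 'I_e := Ordinal (ltn_pmod (val i1 + (e - k)) e_gt0).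
have tt : [:: (inl i0, true); (inl i1, true)] ≈ [:: (inl i1, true); (inl i2, true)].
  by apply/pe_rel/trel_tt; rewrite ?i0_0.
have st i : [:: (inr j, true); (inl i, true); (inr j, true)] ≈
            [:: (inl i, true); (inr j, true); (inl i, true)].
  exact/pe_rel/trel_st.
exact: (@typeB_of_braids _ _ [:: (inl i0, true)] [:: (inl i1, true)] [:: (inl i2, true)]
          [:: (inr j, true)] tt (st i0) (st i1) (st i2) t).
Qed.

Lemma q1_image_commute (j : 'I_(n - 2)) : 1 <= val j ->
  q1_image e n k ++ [:: (inr j, true)] ≈ [:: (inr j, true)] ++ q1_image e n k.
Proof.
move=> j_ge1; have [i0 [i1 [_ _ ->]]] := q1_imageE.
have ts i : [:: (inl i, true)] ++ [:: (inr j, true)] ≈ [:: (inr j, true)] ++ [:: (inl i, true)].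
  by symmetry; apply/pe_rel/trel_stcomm.
exact: (commute_cat (ts i0) (ts i1)).
Qed.

Lemma phi_word_BRel u v : @BRel n u v -> phi_word e n k u ≈ phi_word e n k v.
Proof.
rewrite /phi_word /phi_letter; case=> {u v} a b.
- move=> a_0 b_1 /=; have b_gt0 : 0 < val b by lia.
  have [j j_0 ->] := gen_image_pos b_gt0.
  by rewrite gen_image0 //; apply: q1_image_typeB; rewrite j_0 b_1.
- move=> a_ge1 b_a /=; have [ja ja_a ->] := gen_image_pos a_ge1.
  have b_gt0 : 0 < val b by lia.
  have [jb jb_b ->] := gen_image_pos b_gt0.
  by apply/pe_rel/trel_sbraid; rewrite ja_a jb_b b_a; lia.
- move=> lt_ab /=; have b_gt0 : 0 < val b by lia.
  have [jb jb_b ->] := gen_image_pos b_gt0.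
  have [a_0|a_gt0] := posnP (val a).
    by rewrite gen_image0 // !cats0; apply: q1_image_commute; lia.
  have [ja ja_a ->] := gen_image_pos a_gt0.
  by apply/pe_rel/trel_scomm; rewrite ja_a jb_b; lia.
Qed.

Lemma phi_word_pres_eq u v :
  pres_eq (@BRel n) u v -> phi_word e n k u ≈ phi_word e n k v.
Proof. exact: (word_hom_pres_eq (f := gen_image e n k) phi_word_BRel). Qed.

End Embedding.

Section Injectivity.
Variables (e n k : nat).
Hypotheses (n_gt2 : 2 < n) (e_gt0 : 0 < e).

Definition braid_gen (g : Tgen e n) : nat := if g is inr j then (val j).+1 else 0.

Local Notation braid_word := (relabel braid_gen).
Local Notation strand_equiv := (run_equiv (strand_step n) (@BRel n) (fun p => p < n)).

Lemma braid_gen_lt g : (braid_gen g).+1 < n.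
Proof. by case: g => [i|j] /=; [lia | have := ltn_ord j; lia]. Qed.

Lemma TRel_strand_equiv u v :
  pres_eq (@TRel e n k) u v -> strand_equiv (braid_word u) (braid_word v).
Proof.
apply: run_equiv_pres_eq => [g b p|g b|{}u {}v].
- exact/strand_step_valid/braid_gen_lt.
- exact/strand_cancel/braid_gen_lt.
case=> /=.
- by move=> j1 j2 j12; rewrite j12; apply: strand_braid; have := ltn_ord j2; lia.
- by move=> j1 j2 lt_j; apply: strand_commute; have := ltn_ord j2; lia.
- by move=> j i j_0; rewrite j_0; apply/run_equiv_sym/strand_braid.
- by move=> j i j_ge1; apply/run_equiv_sym/strand_commute => //; have := ltn_ord j; lia.
- by [].
Qed.

Lemma strand_run_phi_letter x :
  let r := run (strand_step n) (braid_word (phi_letter e n k x)) 0 in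
  pres_eq (@BRel n) r.1 [:: x] /\ r.2 = 0.
Proof.
case: x => a b; rewrite /phi_letter /=.
have [a_0|a_gt0] := posnP (val a).
  rewrite gen_image0 //; have [i0 [i1 [_ _ ->]]] := q1_imageE n k e_gt0.
  have lt_0 : 0 < n - 1 by lia.
  have qa c : qword n 0 c = [:: (a, c)].
    by rewrite (qwordE _ lt_0); congr [:: (_, _)]; apply: val_inj.
  by case: b; rewrite /= /strand_step /=; decide_ifs;
    rewrite /loop /ladder /qprod /= ?inv_qword cats0 ?qa.
have [j j_a ->] := gen_image_pos e k a_gt0.
have qa : qword n (val a) b = [:: (a, b)].
  by rewrite (qwordE _ (ltn_ord a)); congr [:: (_, _)]; apply: val_inj.
have ja : (val j).+1 = val a by lia.
by case: b qa => qa; rewrite /= /strand_step /=; decide_ifs; rewrite ja cats0 qa.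
Qed.

Lemma strand_run_phi_word u :
  let r := run (strand_step n) (braid_word (phi_word e n k u)) 0 in
  pres_eq (@BRel n) r.1 u /\ r.2 = 0.
Proof.
elim: u => [|x u IH] //=.
rewrite -/(phi_word e n k u) relabel_cat run_cat /=.
have [-> ->] := strand_run_phi_letter x.
by case: IH => -> ->.
Qed.

Lemma phi_word_inj u v :
  pres_eq (@TRel e n k) (phi_word e n k u) (phi_word e n k v) -> pres_eq (@BRel n) u v.
Proof.
move=> /TRel_strand_equiv /(_ 0 (ltnW (ltnW n_gt2))) [run_uv _].
have [ru _] := strand_run_phi_word u; have [rv _] := strand_run_phi_word v.
by rewrite -ru run_uv rv.
Qed.

End Injectivity.

Theorem mainTheorem13 (n e k : nat) (hn : 3 <= n) (he : 2 <= e)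
    (hk1 : 1 <= k) (hk2 : k <= e - 1) :
  (forall (a : 'I_(n-1)) (i i' : 'I_e), val a = 0 ->
     val i' = (val i + (e - k)) %% e ->
     pres_eq (@TRel e n k) [:: (inl i, true); (inl i', true)]
             (phi_word e n k [:: (a, true)])) /\
  (forall u v : seq ('I_(n-1) * bool),
     pres_eq (@BRel n) u v -> pres_eq (@TRel e n k) (phi_word e n k u) (phi_word e n k v)) /\
  (forall u v : seq ('I_(n-1) * bool),
     pres_eq (@TRel e n k) (phi_word e n k u) (phi_word e n k v) -> pres_eq (@BRel n) u v).
Proof.
have e_gt0 : 0 < e by apply: leq_trans he.
split; last split.
- move=> a i i' a_0 ii'.
  by rewrite /phi_word /phi_letter /= cats0 gen_image0 //; apply: q1_image_tt.
- exact: phi_word_pres_eq.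
- exact: phi_word_inj.
Qed.
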